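(* Let $2\le n\le\infty$, $r\ge1$ and $p,q\in\mathbb Z$. The pushout in $\mathrm{Ch}_n$ of the diagram $0\leftarrow\mathcal ZW^n_r(p,q)\xrightarrow{\iota_r}\mathcal BW^n_r(p,q-1)$ (i.e. the cokernel of $\iota_r$) is isomorphic to $\mathcal ZW^n_r(p+r-1,q+r-2)$.
   Context: Throughout, $R$ is a commutative unital ring. For $1\le n\le\infty$, an $n$-multicomplex is a $\mathbb Z\times\mathbb Z$-bigraded $R$-module $A=\{A^{p,q}\}$ with $R$-linear maps $d_i\colon A\to A$ ($i\ge0$) of bidegree $(-i,1-i)$ such that $\sum_{i+j=l}(-1)^id_id_j=0$ for all $l\ge0$, and $d_i=0$ for all $i\ge n$ (no vanishing condition when $n=\infty$). Morphisms are bidegree $(0,0)$ $R$-linear maps commuting with all $d_i$; the category is denoted $\mathrm{Ch}_n$. Representing objects: $\mathbb D^n(p,q)$ is the free $n$-multicomplex on one generator in bidegree $(p,q)$. $\mathcal ZW^n_0(p,q)=\mathbb D^n(p,q)$ with generator $a_0$. $\mathcal ZW^n_1(p,q)$ is the pushout in $\mathrm{Ch}_n$ of $0\leftarrow\mathbb D^n(p,q+1)\to\mathbb D^n(p,q)$, the right map sending the generator to $d_0a_0$. For $r\ge2$, $\mathcal ZW^n_r(p,q)$ is the pushout in $\mathrm{Ch}_n$ of $\mathcal ZW^n_{r-1}(p,q)\leftarrow\mathbb D^n(p-r+1,q-r+2)\to\mathbb D^n(p-r+1,q-r+1)$, where, writing $x$ for the generator of the middle object and $a_{r-1}$ for that of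 the right one, the left map sends $x\mapsto\sum_{i=1}^{r-1}(-1)^{i+1}d_ia_{r-1-i}$ and the right map sends $x\mapsto d_0a_{r-1}$; the images of $a_0,\dots,a_{r-1}$ in the pushout are still denoted $a_0,\dots,a_{r-1}$ ($a_i$ has bidegree $(p-i,q-i)$). $\mathcal BW^n_0(p,q-1)=0$, $\mathcal BW^n_1(p,q-1)=\mathbb D^n(p,q-1)$, and for $r\ge2$, $\mathcal BW^n_r(p,q-1)=\mathcal ZW^n_{r-1}(p+r-1,q+r-2)\oplus\mathbb D^n(p,q-1)\oplus\mathcal ZW^n_{r-1}(p-1,q-1)$. The morphism $\iota_r\colon\mathcal ZW^n_r(p,q)\to\mathcal BW^n_r(p,q-1)$: $\iota_0=0$; $\iota_1(a_0)=d_0e$ where $e$ generates $\mathbb D^n(p,q-1)$; for $r\ge2$, writing $b_0,\dots,b_{r-2}$ for the generators of $\mathcal ZW^n_{r-1}(p+r-1,q+r-2)$, $e$ for the generator of $\mathbb D^n(p,q-1)$ and $c_0,\dots,c_{r-2}$ for the generators of $\mathcal ZW^n_{r-1}(p-1,q-1)$, $\iota_r(a_j)=d_je+(-1)^j\sum_{i=j+1}^{r+j-1}(-1)^id_ib_{r+j-1-i}+c_{j-1}$ for $0\le j\le r-1$, with $c_{-1}:=0$. *)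

From HB Require Import structures.
From mathcomp Require Import all_boot all_order all_algebra.
Set Implicit Arguments. Unset Strict Implicit. Unset Printing Implicit Defensive.
Import Order.TTheory GRing.Theory Num.Theory.
Local Open Scope ring_scope.

Inductive ninf := NFin of nat | NInf.

(* d_i = 0 is required for i >= n *)
Definition ninf_le (n : ninf) (i : nat) : bool :=
  match n with NFin N => (N <= i)%N | NInf => false end.

Definition ninf_ge2 (n : ninf) : bool :=
  match n with NFin N => (2 <= N)%N | NInf => true end.

Section Defs.
Variable R : comPzRingType.

(* Transport between bidegrees that are (provably) equal; it returns 0 when
   the bidegrees differ, which never happens in the uses below (all uses
   are between equal bidegrees, e.g. (p - j) - i and p - (i + j)). *)
Definition mcast (A : int -> int -> lmodType R) (a b a' b' : int) (x : A a b)
  : A a' b' :=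
  match @eqP _ a a', @eqP _ b b' with
  | ReflectT e1, ReflectT e2 =>
      match e1 in _ = a1, e2 in _ = b1 return A a1 b1 with
      | erefl, erefl => x end
  | _, _ => 0
  end.
Arguments mcast A {a b a' b'} x.

(* n-multicomplexes: bigraded R-modules A^{p,q} with R-linear maps
   d_i : A^{p,q} -> A^{p-i, q+1-i}, with sum_{i+j=l} (-1)^i d_i d_j = 0,
   and d_i = 0 for i >= n. *)
Record mcx (n : ninf) := Mcx {
  mobj :> int -> int -> lmodType R;
  md : forall (i : nat) (p q : int),
         {linear mobj p q -> mobj (p - i%:Z) (q + 1 - i%:Z)};
  md_rel : forall (l : nat) (p q : int) (x : mobj p q),
    \sum_(j < l.+1)
       (-1) ^+ (l - j) *: mcast mobj (a' := p - l%:Z) (b' := q + 2 - l%:Z)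
          (md (l - j) _ _ (md j p q x)) = 0;
  md_vanish : forall (i : nat) (p q : int) (x : mobj p q),
    ninf_le n i -> md i p q x = 0
}.

Definition dd (n : ninf) (A : mcx n) (i : nat) {p q : int} (x : A p q) :=
  md A i p q x.

Record mhom (n : ninf) (A B : mcx n) := Mhom {
  mfun : forall p q : int, {linear A p q -> B p q};
  mfun_comm : forall (i : nat) (p q : int) (x : A p q),
    mfun _ _ (md A i p q x) = md B i p q (mfun p q x)
}.

Definition app (n : ninf) (A B : mcx n) (f : mhom A B) {p q : int} (x : A p q)
  : B p q := mfun f p q x.

Definition meq (n : ninf) (A B : mcx n) (f g : mhom A B) : Prop :=
  forall p q (x : A p q), app f x = app g x.

Definition is_free (n : ninf) (A : mcx n) (p q : int) (g : A p q) : Prop :=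
  forall (B : mcx n) (b : B p q),
    exists f : mhom A B, app f g = b /\
      forall f' : mhom A B, app f' g = b -> meq f' f.

Definition is_zero (n : ninf) (O : mcx n) : Prop :=
  forall p q (x : O p q), x = 0.

Definition is_pushout (n : ninf) (C X Y P : mcx n)
    (f : mhom C X) (g : mhom C Y) (i : mhom X P) (j : mhom Y P) : Prop :=
  (forall p q (x : C p q), app i (app f x) = app j (app g x)) /\
  forall (A : mcx n) (u : mhom X A) (v : mhom Y A),
    (forall p q (x : C p q), app u (app f x) = app v (app g x)) ->
    exists h : mhom P A,
      (forall p q (x : X p q), app h (app i x) = app u x) /\
      (forall p q (y : Y p q), app h (app j y) = app v y) /\
      forall h' : mhom P A,
        (forall p q (x : X p q), app h' (app i x) = app u x) ->
        (forall p q (y : Y p q), app h' (app j y) = app v y) -> meq h' h.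

Definition is_coprod3 (n : ninf) (X1 X2 X3 B : mcx n)
    (u1 : mhom X1 B) (u2 : mhom X2 B) (u3 : mhom X3 B) : Prop :=
  forall (A : mcx n) (h1 : mhom X1 A) (h2 : mhom X2 A) (h3 : mhom X3 A),
    exists h : mhom B A,
      (forall p q (x : X1 p q), app h (app u1 x) = app h1 x) /\
      (forall p q (x : X2 p q), app h (app u2 x) = app h2 x) /\
      (forall p q (x : X3 p q), app h (app u3 x) = app h3 x) /\
      forall h' : mhom B A,
        (forall p q (x : X1 p q), app h' (app u1 x) = app h1 x) ->
        (forall p q (x : X2 p q), app h' (app u2 x) = app h2 x) ->
        (forall p q (x : X3 p q), app h' (app u3 x) = app h3 x) -> meq h' h.

Definition gens (n : ninf) (Z : mcx n) (p q : int) :=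
  forall k : nat, Z (p - k%:Z) (q - k%:Z).

(* is_ZW r p q Z a : Z is ZW^n_r(p,q), built by the iterated pushouts of
   the paper, with a_0, ..., a_{r-1} the (images of the) generators. *)
Fixpoint is_ZW (n : ninf) (r : nat) (p q : int) (Z : mcx n) (a : gens Z p q)
    {struct r} : Prop :=
  match r with
  | 0%N => is_free (a 0%N)
  | 1%N =>
      (* pushout of 0 <- D(p,q+1) -> D(p,q), generator |-> d_0 a_0 *)
      exists (D1 : mcx n) (x : D1 p (q + 1)), is_free x /\
      exists (D0 : mcx n) (e : D0 (p - 0%:Z) (q - 0%:Z)), is_free e /\
      exists (O : mcx n), is_zero O /\
      exists (f : mhom D1 O) (g : mhom D1 D0) (i : mhom O Z) (j : mhom D0 Z),
        app g x = mcast D0 (dd 0 e) /\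
        is_pushout f g i j /\ app j e = a 0%N
  | k.+1 =>
      (* r = k+1 >= 2 : pushout of
         ZW_{r-1}(p,q) <- D(p-r+1,q-r+2) -> D(p-r+1,q-r+1) *)
      exists (Y : mcx n) (b : gens Y p q), @is_ZW n k p q Y b /\
      exists (Dx : mcx n) (x : Dx (p - k%:Z) (q - k%:Z + 1)), is_free x /\
      exists (Da : mcx n) (e : Da (p - k%:Z) (q - k%:Z)), is_free e /\
      exists (f : mhom Dx Y) (g : mhom Dx Da) (i : mhom Y Z) (j : mhom Da Z),
        app f x = \sum_(1 <= i0 < k.+1)
                     (-1) ^+ i0.+1 *: mcast Y (dd i0 (b (k - i0)%N)) /\
        app g x = mcast Da (dd 0 e) /\
        is_pushout f g i j /\
        (forall m : nat, (m < k)%N -> app i (b m) = a m) /\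
        app j e = a k
  end.
Arguments is_ZW {n} r p q Z a.

(* is_BW_iota r p q Z a B iota : B is BW^n_r(p,q-1) and iota : Z -> B is the
   morphism iota_r of the paper (Z being ZW^n_r(p,q) with generators a). *)
Definition is_BW_iota (n : ninf) (r : nat) (p q : int) (Z : mcx n)
    (a : gens Z p q) (B : mcx n) (iota : mhom Z B) : Prop :=
  match r with
  | 0%N => is_zero B
  | 1%N =>
      exists e : B p (q - 1), is_free e /\
        app iota (a 0%N) = mcast B (dd 0 e)
  | _ =>
      exists (Zb : mcx n) (bg : gens Zb (p + r%:Z - 1) (q + r%:Z - 2)),
        is_ZW r.-1 (p + r%:Z - 1) (q + r%:Z - 2) Zb bg /\
      exists (De : mcx n) (e : De p (q - 1)), is_free e /\
      exists (Zc : mcx n) (cg : gens Zc (p - 1) (q - 1)),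
        is_ZW r.-1 (p - 1) (q - 1) Zc cg /\
      exists (u1 : mhom Zb B) (u2 : mhom De B) (u3 : mhom Zc B),
        is_coprod3 u1 u2 u3 /\
        forall j : nat, (j < r)%N ->
          app iota (a j) =
            mcast B (dd j (app u2 e))
            + (-1) ^+ j *: \sum_(j.+1 <= i < r + j)
                 (-1) ^+ i *: mcast B (dd i (app u1 (bg (r + j - 1 - i)%N)))
            + match j with
              | 0%N => 0
              | j'.+1 => mcast B (app u3 (cg j'))
              end
  end.
Arguments is_BW_iota {n} r p q Z a B iota.

Definition mcx_iso (n : ninf) (A B : mcx n) : Prop :=
  exists (f : mhom A B) (g : mhom B A),
    (forall p q (x : A p q), app g (app f x) = x) /\
    (forall p q (y : B p q), app f (app g y) = y).

End Defs.
Arguments mcast {R} A {a b a' b'} x.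
Arguments is_ZW {R n} r p q Z a.
Arguments is_BW_iota {R n} r p q Z a B iota.

(* ZW_r(P,Q) corepresents families z_0, ..., z_(r-1), z_k in bidegree
   (P-k, Q-k), subject to d_0 z_k = sum_(1 <= i <= k) (-1)^(i+1) d_i z_(k-i):
   each pushout adds one generator and one such relation.  It therefore
   suffices to show that the cokernel of iota_r corepresents the same functor
   for (P,Q) = (p+r-1, q+r-2), with generators the images of b_0, ..., b_(r-2)
   and of e.  Killing iota_r(a_0) imposes exactly the last relation on them,
   while killing iota_r(a_(j+1)) determines the image of c_j; conversely the
   relations on the a's make these forced values of the c's satisfy the
   relations of ZW_(r-1)(p-1,q-1), so that every admissible family extends. *)

From HB Require Import structures.
From mathcomp Require Import all_boot all_order all_algebra zify.
Set Implicit Arguments. Unset Strict Implicit. Unset Printing Implicit Defensive.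
Import GRing.Theory.
Local Open Scope ring_scope.

(** * Transport between bidegrees *)

Section Casts.
Variable R : comPzRingType.
Implicit Types A B : int -> int -> lmodType R.

Lemma mcast_id A a b (x : A a b) : mcast A (a' := a) (b' := b) x = x.
Proof.
rewrite /mcast; case: eqP => // e1; case: eqP => // e2.
by rewrite (eq_irrelevance e1 erefl) (eq_irrelevance e2 erefl).
Qed.

Lemma mcast_neq A a b a' b' (x : A a b) :
  (a != a') || (b != b') -> mcast A (a' := a') (b' := b') x = 0.
Proof.
move=> H; rewrite /mcast; case: eqP => // e1; case: eqP => // e2.
by rewrite e1 e2 !eqxx in H.
Qed.

Lemma mcastK A a b a' b' a'' b'' (x : A a b) : a = a' -> b = b' ->
  mcast A (a' := a'') (b' := b'') (mcast A (a' := a') (b' := b') x) = mcast A x.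
Proof. by move=> e1 e2; case: a' / e1; case: b' / e2; rewrite mcast_id. Qed.

Lemma mcastK' A a b a' b' (x : A a b) : a = a' -> b = b' ->
  mcast A (a' := a) (b' := b) (mcast A (a' := a') (b' := b') x) = x.
Proof. by move=> e1 e2; rewrite mcastK // mcast_id. Qed.

Lemma mcast_tr A a b a1 b1 a2 b2 (x : A a b) : a = a1 -> b = b1 ->
  mcast A (a' := a2) (b' := b2) x = mcast A (mcast A (a' := a1) (b' := b1) x).
Proof. by move=> e1 e2; rewrite mcastK. Qed.

(* Injectivity of the shifts keeps a cast between distinct bidegrees (which
   is 0) a cast between distinct bidegrees. *)
Lemma mcast_natural A B (s t : int -> int)
    (F : forall a b, {additive A a b -> B (s a) (t b)}) :
    injective s -> injective t -> forall a b a' b' (x : A a b),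
  F a' b' (mcast A (a' := a') (b' := b') x) = mcast B (F a b x).
Proof.
move=> sI tI a b a' b' x.
have [<-|na] := eqVneq a a'; first have [<-|nb] := eqVneq b b'.
- by rewrite !mcast_id.
- by rewrite !mcast_neq ?raddf0 ?(inj_eq tI) ?nb ?orbT.
- by rewrite !mcast_neq ?raddf0 ?(inj_eq sI) ?na.
Qed.

Lemma mcast_is_linear A a b a' b' : linear (@mcast R A a b a' b').
Proof.
move=> c x y; have [ea|na] := eqVneq a a'; first have [eb|nb] := eqVneq b b'.
- by case: a' / ea; case: b' / eb; rewrite !mcast_id.
- by rewrite !mcast_neq ?nb ?orbT // scaler0 addr0.
- by rewrite !mcast_neq ?na // scaler0 addr0.
Qed.

HB.instance Definition _ (A : int -> int -> lmodType R) (a b a' b' : int) :=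
  GRing.isLinear.Build R (A a b) (A a' b') _ (@mcast R A a b a' b')
    (@mcast_is_linear A a b a' b').

Lemma mcast0 A a b a' b' : mcast A (a' := a') (b' := b') (0 : A a b) = 0.
Proof. exact: raddf0. Qed.

Lemma mcastN A a b a' b' (x : A a b) :
  mcast A (a' := a') (b' := b') (- x) = - mcast A x.
Proof. exact: raddfN. Qed.

Lemma mcastD A a b a' b' (x y : A a b) :
  mcast A (a' := a') (b' := b') (x + y) = mcast A x + mcast A y.
Proof. exact: raddfD. Qed.

Lemma mcastZ A a b a' b' c (x : A a b) :
  mcast A (a' := a') (b' := b') (c *: x) = c *: mcast A x.
Proof. exact: linearZ. Qed.

Lemma mcast_sum A a b a' b' (I : Type) (s : seq I) (P : pred I) (F : I -> A a b) :
  mcast A (a' := a') (b' := b') (\sum_(i <- s | P i) F i) = \sum_(i <- s | P i) mcast A (F i).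
Proof. exact: raddf_sum. Qed.

Lemma mcast_inj A a b a' b' (x y : A a b) : a = a' -> b = b' ->
  mcast A (a' := a') (b' := b') x = mcast A y -> x = y.
Proof. by move=> e1 e2; case: a' / e1; case: b' / e2; rewrite !mcast_id. Qed.

End Casts.

(** * Morphisms of multicomplexes *)

Section Multicomplexes.
Variable R : comPzRingType.
Variable n : ninf.
Implicit Types A B C W X Y : mcx R n.

Lemma app_mcast A B (h : mhom A B) a b a' b' (x : A a b) :
  app h (mcast A (a' := a') (b' := b') x) = mcast B (app h x).
Proof. exact: (mcast_natural (s := id) (t := id) (mfun h)). Qed.

Lemma dd_mcast A k a b a' b' (x : A a b) :
  dd k (mcast A (a' := a') (b' := b') x) = mcast A (dd k x).
Proof. by apply: (mcast_natural (md A k)) => [u v /addIr | u v /addIr /addIr]. Qed.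

Lemma app_dd A B (h : mhom A B) k p q (x : A p q) : app h (dd k x) = dd k (app h x).
Proof. exact: mfun_comm. Qed.

Lemma dd0 A k p q : dd k (0 : A p q) = 0.
Proof. exact: raddf0. Qed.
Lemma ddN A k p q (x : A p q) : dd k (- x) = - dd k x.
Proof. exact: raddfN. Qed.

Lemma appD A B (h : mhom A B) p q (x y : A p q) : app h (x + y) = app h x + app h y.
Proof. exact: raddfD. Qed.
Lemma appZ A B (h : mhom A B) p q c (x : A p q) : app h (c *: x) = c *: app h x.
Proof. exact: linearZ. Qed.
Lemma app0 A B (h : mhom A B) p q : app h (0 : A p q) = 0.
Proof. exact: raddf0. Qed.
Lemma app_sum A B (h : mhom A B) p q (I : Type) (s : seq I) (P : pred I) (F : I -> A p q) :
  app h (\sum_(k <- s | P k) F k) = \sum_(k <- s | P k) app h (F k).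
Proof. exact: raddf_sum. Qed.

Lemma mcomp_comm A B C (g : mhom B C) (f : mhom A B) i p q (x : A p q) :
  (mfun g _ _ \o mfun f _ _) (md A i p q x) = md C i p q ((mfun g p q \o mfun f p q) x).
Proof. by rewrite /= !mfun_comm. Qed.

Definition mcomp A B C (g : mhom B C) (f : mhom A B) : mhom A C :=
  @Mhom R n A C (fun p q => (mfun g p q \o mfun f p q : {linear _ -> _}))
    (mcomp_comm g f).

Lemma app_comp A B C (g : mhom B C) (f : mhom A B) p q (x : A p q) :
  app (mcomp g f) x = app g (app f x).
Proof. by []. Qed.

Definition mzero A B : mhom A B :=
  @Mhom R n A B (fun p q => (\0 : {linear _ -> _})) 
    (fun i p q x => esym (raddf0 (md B i p q))).

Lemma app_zero A B p q (x : A p q) : app (mzero A B) x = 0.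
Proof. by []. Qed.

Definition mid A : mhom A A :=
  @Mhom R n A A (fun p q => (idfun : {linear _ -> _})) (fun i p q x => erefl).

Lemma free_desc A p q (g : A p q) : is_free g ->
  forall B (b : B p q), exists h : mhom A B, app h g = b.
Proof. by move=> Fg B b; have [h [hg _]] := Fg B b; exists h. Qed.

Lemma free_uniq A B p q (g : A p q) (h1 h2 : mhom A B) :
  is_free g -> app h1 g = app h2 g -> meq h1 h2.
Proof.
move=> Fg E; have [h [_ Hu]] := Fg B (app h1 g).
by move=> p' q' x; rewrite (Hu h1 erefl) (Hu h2 (esym E)).
Qed.

Lemma free_comp_uniq W X Y p q (w : W p q) (f : mhom W X) (g : mhom W Y)
    A (u : mhom X A) (v : mhom Y A) : is_free w ->
  app u (app f w) = app v (app g w) ->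
  forall p' q' (x : W p' q'), app u (app f x) = app v (app g x).
Proof. by move=> Fw E; exact: (free_uniq (h1 := mcomp u f) (h2 := mcomp v g) Fw). Qed.

Section Pushout.
Variables (W X Y P : mcx R n) (f : mhom W X) (g : mhom W Y).
Variables (i : mhom X P) (j : mhom Y P).
Hypothesis Hpo : is_pushout f g i j.

Lemma pushout_desc A (u : mhom X A) (v : mhom Y A) :
  (forall p q (x : W p q), app u (app f x) = app v (app g x)) ->
  exists h : mhom P A, (forall p q (x : X p q), app h (app i x) = app u x) /\
                       (forall p q (y : Y p q), app h (app j y) = app v y).
Proof. by move=> Euv; have [h [Hi [Hj _]]] := proj2 Hpo A u v Euv; exists h. Qed.

Lemma pushout_uniq A (h1 h2 : mhom P A) :
  (forall p q (x : X p q), app h1 (app i x) = app h2 (app i x)) ->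
  (forall p q (y : Y p q), app h1 (app j y) = app h2 (app j y)) -> meq h1 h2.
Proof.
move=> Ei Ej.
have compat p q (x : W p q) : app (mcomp h1 i) (app f x) = app (mcomp h1 j) (app g x).
  by rewrite !app_comp (proj1 Hpo).
have [h [_ [_ Hu]]] := proj2 Hpo A _ _ compat.
have h1E : meq h1 h by apply: Hu.
have h2E : meq h2 h by apply: Hu => p q x; rewrite app_comp ?Ei ?Ej.
by move=> p q x; rewrite h1E h2E.
Qed.

End Pushout.

Lemma coprod3_uniq X1 X2 X3 B A (u1 : mhom X1 B) (u2 : mhom X2 B) (u3 : mhom X3 B)
    (h1 h2 : mhom B A) : is_coprod3 u1 u2 u3 ->
  (forall p q (x : X1 p q), app h1 (app u1 x) = app h2 (app u1 x)) ->
  (forall p q (x : X2 p q), app h1 (app u2 x) = app h2 (app u2 x)) ->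
  (forall p q (x : X3 p q), app h1 (app u3 x) = app h2 (app u3 x)) -> meq h1 h2.
Proof.
move=> Hc E1 E2 E3.
have [h [_ [_ [_ Hu]]]] := Hc A (mcomp h1 u1) (mcomp h1 u2) (mcomp h1 u3).
have h1E : meq h1 h by apply: Hu.
have h2E : meq h2 h by apply: Hu => p q x; rewrite app_comp ?E1 ?E2 ?E3.
by move=> p q x; rewrite h1E h2E.
Qed.

(** * The universal property of ZW_r *)

(* [d_0 z_k = sum_(1 <= i <= k) (-1)^(i+1) d_i z_(k-i)]: the relation imposed
   on the generator [a_k] by the [k]-th pushout defining [ZW_r]. *)
Definition ZW_rel A P Q (z : gens A P Q) (k : nat) : Prop :=
  mcast A (a' := P - k%:Z) (b' := Q - k%:Z + 1) (dd 0 (z k))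
  = \sum_(1 <= i < k.+1) (-1) ^+ i.+1 *: mcast A (dd i (z (k - i)%N)).

Lemma ZW_rel0P A P Q (z : gens A P Q) : ZW_rel z 0 <-> dd 0 (z 0%N) = (0 : A _ _).
Proof.
rewrite /ZW_rel big_geq //; split=> [E|->]; last exact: raddf0.
by rewrite -[LHS](@mcastK' _ A _ _ (P - 0%:Z) (Q - 0%:Z + 1)) ?E ?raddf0 //; lia.
Qed.

Lemma ZW_rel_map A B (h : mhom A B) P Q (z : gens A P Q) (w : gens B P Q) k :
  (forall m, (m <= k)%N -> app h (z m) = w m) -> ZW_rel z k -> ZW_rel w k.
Proof.
move=> Hzw E; rewrite /ZW_rel -Hzw // -app_dd -app_mcast E app_sum.
by apply: eq_big_nat => i _; rewrite appZ app_mcast app_dd Hzw // leq_subr.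
Qed.

Lemma ZW_rel_zero A P Q k : ZW_rel (fun m => 0 : A (P - m%:Z) (Q - m%:Z)) k.
Proof.
by rewrite /ZW_rel dd0 mcast0 big1 // => i _; rewrite dd0 mcast0 scaler0.
Qed.

Lemma ZW_rel_shift A P Q k (t : gens A P Q) : t 0%N = 0 ->
  (forall m, (m < k.+1)%N -> ZW_rel t m) -> forall m, (m < k)%N ->
  ZW_rel (fun m => - mcast A (a' := P - 1 - m%:Z) (b' := Q - 1 - m%:Z) (t m.+1)) m.
Proof.
move=> t0 Ht m Hm; have := Ht m.+1 Hm; rewrite /ZW_rel => E.
rewrite ddN dd_mcast mcastN mcastK; try lia.
rewrite (mcast_tr (a1 := P - (m.+1)%:Z) (b1 := Q - (m.+1)%:Z + 1)); try lia.
rewrite E big_nat_recr //= subnn t0 dd0 mcast0 scaler0 addr0 mcast_sum -sumrN.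
apply: eq_big_nat => i /andP[i1 i2].
rewrite ddN dd_mcast mcastN !mcastK; try lia.
by rewrite mcastZ mcastK ?scalerN ?subSn //; lia.
Qed.

Definition is_ZW_univ r P Q A (a : gens A P Q) : Prop :=
  [/\ forall k, (k < r)%N -> ZW_rel a k,
      forall B (z : gens B P Q), (forall k, (k < r)%N -> ZW_rel z k) ->
        exists h : mhom A B, forall k, (k < r)%N -> app h (a k) = z k
    & forall B (h1 h2 : mhom A B),
        (forall k, (k < r)%N -> app h1 (a k) = app h2 (a k)) -> meq h1 h2].

Lemma ZW_univ_iso r P Q A B (a : gens A P Q) (b : gens B P Q) :
  is_ZW_univ r a -> is_ZW_univ r b -> mcx_iso A B.
Proof.
move=> [relA extA uniqA] [relB extB uniqB].
have [f Hf] := extA B b relB; have [g Hg] := extB A a relA.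
exists f, g; split=> p q x.
- by rewrite -app_comp (uniqA A (mcomp g f) (mid A)) // => k Hk; rewrite app_comp Hf ?Hg.
- by rewrite -app_comp (uniqB B (mcomp f g) (mid B)) // => k Hk; rewrite app_comp Hg ?Hf.
Qed.

Lemma ZW1_univ P Q Z (a : gens Z P Q) : is_ZW 1 P Q Z a -> is_ZW_univ 1 a.
Proof.
move=> [D1 [x [Fx [D0 [e [Fe [O [HO [f [g [i [j [Hg [Hpo Hj]]]]]]]]]]]]]].
have d0e : dd 0 e = mcast D0 (app g x) by rewrite Hg mcastK' //; lia.
split.
- case=> // _; apply/ZW_rel0P.
  by rewrite -Hj -app_dd d0e app_mcast -(proj1 Hpo) (HO _ _ (app f x)) app0 mcast0.
- move=> A z Hz; have [ve Hve] := free_desc Fe (z 0%N).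
  have [|h [_ Hh]] := pushout_desc Hpo (u := mzero O A) (v := ve).
    apply: free_comp_uniq Fx _.
    by rewrite app_zero Hg app_mcast app_dd Hve ((ZW_rel0P z).1 (Hz 0%N erefl)) mcast0.
  by exists h; case=> // _; rewrite -Hj Hh.
- move=> A h1 h2 E; apply: (pushout_uniq Hpo) => p' q' y.
    by rewrite (HO _ _ y) !app0.
  by apply: (free_uniq (h1 := mcomp h1 j) (h2 := mcomp h2 j) Fe); rewrite !app_comp Hj E.
Qed.

Lemma ZWS_univ k P Q Z (a : gens Z P Q) :
  (forall Y (b : gens Y P Q), is_ZW k.+1 P Q Y b -> is_ZW_univ k.+1 b) ->
  is_ZW k.+2 P Q Z a -> is_ZW_univ k.+2 a.
Proof.
move=> IH [Y [b [HY [Dx [x [Fx [Da [e [Fe [f [g [i [j [Hf [Hg [Hpo [Hi Hj]]]]]]]]]]]]]]]]].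
have [rel_b ext_b uniq_b] := IH Y b HY.
have bE m : (m < k.+1)%N -> app i (b m) = a m by exact: Hi.
split.
- move=> m; rewrite ltnS leq_eqVlt => /orP[/eqP->|Hm]; last first.
    by apply: (ZW_rel_map (h := i) _ (rel_b m Hm)) => m' Hm'; apply: bE; lia.
  rewrite /ZW_rel -Hj -app_dd -app_mcast -Hg -(proj1 Hpo) Hf app_sum.
  by apply: eq_big_nat => i0 /andP[i1 i2]; rewrite appZ app_mcast app_dd bE //; lia.
- move=> A z Hz.
  have [hY HhY] := ext_b A z (fun m Hm => Hz m (ltnW Hm)).
  have [ve Hve] := free_desc Fe (z k.+1).
  have [|h [Hh1 Hh2]] := pushout_desc Hpo (u := hY) (v := ve).
    apply: free_comp_uniq Fx _.
    rewrite Hg app_mcast app_dd Hve (Hz k.+1 (ltnSn _)) Hf app_sum.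
    by apply: eq_big_nat => i0 /andP[i1 i2]; rewrite appZ app_mcast app_dd HhY //; lia.
  exists h => m; rewrite ltnS leq_eqVlt => /orP[/eqP->|Hm]; first by rewrite -Hj Hh2.
  by rewrite -bE // Hh1 HhY.
- move=> A h1 h2 E; apply: (pushout_uniq Hpo) => p' q' y.
    apply: (uniq_b A (mcomp h1 i) (mcomp h2 i)) => m Hm.
    by rewrite !app_comp bE // E // ltnW.
  by apply: (free_uniq (h1 := mcomp h1 j) (h2 := mcomp h2 j) Fe); rewrite !app_comp Hj E.
Qed.

Lemma ZW_univ r P Q Z (a : gens Z P Q) :
  (0 < r)%N -> is_ZW r P Q Z a -> is_ZW_univ r a.
Proof.
case: r => // r _; elim: r Z a => [|k IH] Z a; first exact: ZW1_univ.
exact: ZWS_univ.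
Qed.

(** * The cokernel of iota_r *)

Section Cokernel.
Variables (Z B O C : mcx R n) (f : mhom Z O) (iota : mhom Z B).
Variables (i : mhom O C) (j : mhom B C).
Hypotheses (HO : is_zero O) (HC : is_pushout f iota i j).

Lemma coker_comp0 p q (x : Z p q) : app j (app iota x) = 0.
Proof. by rewrite -(proj1 HC) (HO (app f x)) app0. Qed.

Lemma coker_uniq A (h1 h2 : mhom C A) :
  (forall p q (y : B p q), app h1 (app j y) = app h2 (app j y)) -> meq h1 h2.
Proof. by apply: (pushout_uniq HC) => p q x; rewrite (HO x) !app0. Qed.

Lemma coker_desc r P Q (a : gens Z P Q) A (v : mhom B A) : is_ZW_univ r a ->
  (forall k, (k < r)%N -> app v (app iota (a k)) = 0) ->
  exists psi : mhom C A, forall p q (y : B p q), app psi (app j y) = app v y.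
Proof.
move=> [_ _ uniqZ] Hv.
have [|psi [_ Hpsi]] := pushout_desc HC (u := mzero O A) (v := v); last by exists psi.
move=> p q x; rewrite app_zero -app_comp.
by rewrite (uniqZ A (mcomp v iota) (mzero Z A)) // => k Hk; rewrite app_comp Hv.
Qed.

Section IotaOne.
Variables (p q : int) (a : gens Z p q) (e : B p (q - 1)).
Hypotheses (HZ : is_ZW_univ 1 a) (Fe : is_free e).
Hypothesis He : app iota (a 0%N) = mcast B (dd 0 e).

Lemma coker_iota1_univ :
  is_ZW_univ 1 (fun m => mcast C (a' := p + 1%:Z - 1 - m%:Z)
                                 (b' := q + 1%:Z - 2 - m%:Z) (app j e)).
Proof.
have d0e : dd 0 e = mcast B (app iota (a 0%N)) by rewrite He mcastK' //; lia.
split.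
- case=> // _; apply/ZW_rel0P.
  by rewrite dd_mcast -app_dd d0e app_mcast coker_comp0 !mcast0.
- move=> A w /(_ 0%N erefl)/ZW_rel0P w0.
  have [v Hv] := free_desc Fe (mcast A (a' := p) (b' := q - 1) (w 0%N)).
  have [|psi Hpsi] := coker_desc HZ (v := v).
    by case=> // _; rewrite He app_mcast app_dd Hv dd_mcast w0 !mcast0.
  by exists psi; case=> // _; rewrite app_mcast Hpsi Hv mcastK' //; lia.
- move=> A h1 h2 /(_ 0%N erefl); rewrite !app_mcast => /mcast_inj E.
  apply: coker_uniq; apply: (free_uniq (h1 := mcomp h1 j) (h2 := mcomp h2 j) Fe).
  by rewrite !app_comp E //; lia.
Qed.

End IotaOne.

Section IotaBW.
Variables (p q : int) (k : nat).
Local Notation P := (p + (k.+2)%:Z - 1).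
Local Notation Q := (q + (k.+2)%:Z - 2).

(* The [e]- and [b]-components of [iota_r (a_jj)], for [r = k + 2]. *)
Definition iota_eb A (y : A p (q - 1)) (w : gens A P Q) (jj : nat) :
    A (p - jj%:Z) (q - jj%:Z) :=
  mcast A (dd jj y) + (-1) ^+ jj *: \sum_(jj.+1 <= l < k.+2 + jj)
     (-1) ^+ l *: mcast A (dd l (w (k.+2 + jj - 1 - l)%N)).

Lemma app_iota_eb A A' (F : mhom A A') y w jj :
  app F (iota_eb y w jj) = iota_eb (app F y) (fun m => app F (w m)) jj.
Proof.
rewrite /iota_eb appD appZ app_sum app_mcast app_dd; congr (_ + _ *: _).
by apply: eq_bigr => l _; rewrite appZ app_mcast app_dd.
Qed.

Lemma iota_eb_ext A y (w w' : gens A P Q) jj :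
  (forall m, (m < k.+1)%N -> w m = w' m) -> iota_eb y w jj = iota_eb y w' jj.
Proof.
move=> Ew; rewrite /iota_eb; congr (_ + _ *: _).
by apply: eq_big_nat => l /andP[l1 l2]; rewrite Ew //; lia.
Qed.

Lemma ZW_rel_iota_eb A (w : gens A P Q) :
  ZW_rel w k.+1 <-> iota_eb (mcast A (w k.+1)) w 0 = 0.
Proof.
pose c := mcast A (a := p - 0%:Z) (b := q - 0%:Z)
                  (a' := P - (k.+1)%:Z) (b' := Q - (k.+1)%:Z + 1).
have cE : c (iota_eb (mcast A (w k.+1)) w 0) =
    mcast A (dd 0 (w k.+1)) + \sum_(1 <= l < k.+2) (-1) ^+ l *:
      mcast A (a' := P - (k.+1)%:Z) (b' := Q - (k.+1)%:Z + 1) (dd l (w (k.+1 - l)%N)).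
  rewrite /c /iota_eb mcastD mcastZ expr0 scale1r mcast_sum dd_mcast !mcastK; try lia.
  rewrite addn0; congr (_ + _); apply: eq_big_nat => l /andP[l1 l2].
  by rewrite mcastZ mcastK; [congr (_ *: mcast A (dd l (w _))) | ..]; lia.
rewrite /ZW_rel; split=> [E|].
  apply: (mcast_inj (a' := P - (k.+1)%:Z) (b' := Q - (k.+1)%:Z + 1)); try lia.
  rewrite -/c cE E /c mcast0 -big_split /= big1 // => l _.
  by rewrite exprS mulN1r scaleNr addNr.
move/(congr1 c); rewrite cE /c mcast0 => /eqP; rewrite addr_eq0 => /eqP ->.
by rewrite -sumrN; apply: eq_bigr => l _; rewrite exprS mulN1r scaleNr.
Qed.

Variables (a : gens Z p q) (Zb : mcx R n) (bg : gens Zb P Q).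
Variables (De : mcx R n) (e : De p (q - 1)) (Zc : mcx R n) (cg : gens Zc (p - 1) (q - 1)).
Variables (u1 : mhom Zb B) (u2 : mhom De B) (u3 : mhom Zc B).
Hypotheses (HZ : is_ZW_univ k.+2 a) (HZb : is_ZW_univ k.+1 bg) (Fe : is_free e).
Hypotheses (HZc : is_ZW_univ k.+1 cg) (Hcop : is_coprod3 u1 u2 u3).
Hypothesis Hio : forall jj, (jj < k.+2)%N ->
  app iota (a jj) = iota_eb (app u2 e) (fun m => app u1 (bg m)) jj +
    match jj with 0%N => 0 | j'.+1 => mcast B (app u3 (cg j')) end.

Lemma app_iota A (F : mhom B A) jj : (jj < k.+2)%N ->
  app F (app iota (a jj)) =
    iota_eb (app F (app u2 e)) (fun m => app F (app u1 (bg m))) jj +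
    match jj with 0%N => 0 | j'.+1 => mcast A (app F (app u3 (cg j'))) end.
Proof. by case: jj => [|jj] Hjj; rewrite Hio // appD app_iota_eb ?app0 ?app_mcast. Qed.

Lemma BW_hom_ext A (y : A p (q - 1)) (wb : gens A P Q) (wc : gens A (p - 1) (q - 1)) :
  (forall m, (m < k.+1)%N -> ZW_rel wb m) -> (forall m, (m < k.+1)%N -> ZW_rel wc m) ->
  exists v : mhom B A,
    [/\ forall m, (m < k.+1)%N -> app v (app u1 (bg m)) = wb m,
        app v (app u2 e) = y
      & forall m, (m < k.+1)%N -> app v (app u3 (cg m)) = wc m].
Proof.
move=> Hwb Hwc; have [_ ext_b _] := HZb; have [_ ext_c _] := HZc.
have [h1 H1] := ext_b A wb Hwb; have [h2 H2] := free_desc Fe y.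
have [h3 H3] := ext_c A wc Hwc; have [v [V1 [V2 [V3 _]]]] := Hcop h1 h2 h3.
by exists v; split=> [m Hm||m Hm]; rewrite ?V1 ?V2 ?V3 ?H1 ?H2 ?H3.
Qed.

Lemma BW_hom_uniq A (v1 v2 : mhom B A) :
  (forall m, (m < k.+1)%N -> app v1 (app u1 (bg m)) = app v2 (app u1 (bg m))) ->
  app v1 (app u2 e) = app v2 (app u2 e) ->
  (forall m, (m < k.+1)%N -> app v1 (app u3 (cg m)) = app v2 (app u3 (cg m))) ->
  meq v1 v2.
Proof.
move=> E1 E2 E3; have [_ _ uniq_b] := HZb; have [_ _ uniq_c] := HZc.
apply: (coprod3_uniq Hcop) => p' q' x.
- exact: (uniq_b A (mcomp v1 u1) (mcomp v2 u1)).
- exact: (free_uniq (h1 := mcomp v1 u2) (h2 := mcomp v2 u2) Fe).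
- exact: (uniq_c A (mcomp v1 u3) (mcomp v2 u3)).
Qed.

(* The [c]-components are forced to be [- v0 (iota a_(m+1))], where [v0] sends
   all [c]'s to 0; they satisfy the [ZW_(r-1)] relations because
   [v0 (iota a_0) = 0] is the last relation of [w]. *)
Lemma BW_hom_kill_iota A (w : gens A P Q) : (forall m, (m < k.+2)%N -> ZW_rel w m) ->
  exists v : mhom B A,
    [/\ forall m, (m < k.+1)%N -> app v (app u1 (bg m)) = w m,
        app v (app u2 e) = mcast A (w k.+1)
      & forall m, (m < k.+2)%N -> app v (app iota (a m)) = 0].
Proof.
move=> Hw; have [rel_a _ _] := HZ.
have Hwb m : (m < k.+1)%N -> ZW_rel w m by move=> Hm; apply: Hw; lia.
have [v0 [V01 V02 V03]] :=
  BW_hom_ext (mcast A (w k.+1)) Hwb (fun m _ => ZW_rel_zero A _ _ m).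
pose t m := app v0 (app iota (a m)).
have t_rel m : (m < k.+2)%N -> ZW_rel t m.
  by move=> Hm; apply: (ZW_rel_map (h := mcomp v0 iota) _ (rel_a m Hm)).
have eb_v0 jj : iota_eb (app v0 (app u2 e)) (fun m => app v0 (app u1 (bg m))) jj =
                iota_eb (mcast A (w k.+1)) w jj.
  by rewrite V02; apply: iota_eb_ext => m Hm; rewrite V01.
have t0 : t 0%N = 0.
  by rewrite /t app_iota // (addr0 (iota_eb _ _ _)) eb_v0; apply/ZW_rel_iota_eb/Hw.
have [v [V1 V2 V3]] := BW_hom_ext (mcast A (w k.+1)) Hwb (ZW_rel_shift t0 t_rel).
exists v; split=> // m Hm; have := app_iota v0 Hm; rewrite -/(t m) app_iota //.
have -> : iota_eb (app v (app u2 e)) (fun m => app v (app u1 (bg m))) m =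
          iota_eb (app v0 (app u2 e)) (fun m => app v0 (app u1 (bg m))) m.
  by rewrite V2 eb_v0; apply: iota_eb_ext => m' Hm'; rewrite V1.
case: m Hm => [|m] Hm; first by rewrite (addr0 (iota_eb _ _ _)) t0 => <-.
rewrite V03 // mcast0 (addr0 (iota_eb _ _ _)) V3 // mcastN mcastK' => [->||].
- exact: subrr.
all: lia.
Qed.

Lemma coker_BW_univ :
  is_ZW_univ k.+2 (fun m => if (m < k.+1)%N then app j (app u1 (bg m))
                           else mcast C (a' := P - m%:Z) (b' := Q - m%:Z)
                                      (app j (app u2 e))).
Proof.
set z := fun m => _.
have [rel_b _ _] := HZb.
have jb m : (m < k.+1)%N -> app j (app u1 (bg m)) = z m by rewrite /z => ->.
have je : app j (app u2 e) = mcast C (z k.+1) by rewrite /z ltnn mcastK' //; lia.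
split.
- move=> m; rewrite ltnS leq_eqVlt => /orP[/eqP->|Hm].
    apply/ZW_rel_iota_eb; rewrite -je -(iota_eb_ext _ _ jb).
    by have := app_iota j (ltn0Sn _); rewrite coker_comp0 (addr0 (iota_eb _ _ _)).
  by apply: (ZW_rel_map (h := mcomp j u1) _ (rel_b m Hm)) => m' Hm'; apply: jb; lia.
- move=> A w Hw; have [v [V1 V2 Vi]] := BW_hom_kill_iota Hw.
  have [psi Hpsi] := coker_desc HZ Vi; exists psi => m Hm.
  have [Hm'|Hm'] := ltnP m k.+1; first by rewrite -jb // Hpsi V1.
  have -> : m = k.+1 by lia.
  apply: (mcast_inj (a' := p) (b' := q - 1)); try lia.
  by rewrite -app_mcast -je Hpsi V2.
- move=> A h1 h2 E; apply: coker_uniq.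
  have Eb m : (m < k.+1)%N ->
      app h1 (app j (app u1 (bg m))) = app h2 (app j (app u1 (bg m))).
    by move=> Hm; rewrite jb // E // ltnW.
  have Ee : app h1 (app j (app u2 e)) = app h2 (app j (app u2 e)).
    by rewrite je !app_mcast E.
  apply: (BW_hom_uniq (v1 := mcomp h1 j) (v2 := mcomp h2 j)) => // m Hm.
  have Eeb :
      iota_eb (app h1 (app j (app u2 e))) (fun m => app h1 (app j (app u1 (bg m)))) m.+1 =
      iota_eb (app h2 (app j (app u2 e))) (fun m => app h2 (app j (app u1 (bg m)))) m.+1.
    by rewrite Ee; apply: iota_eb_ext => m' Hm'; rewrite Eb.
  have := app_iota (mcomp h1 j) (jj := m.+1) Hm.
  have := app_iota (mcomp h2 j) (jj := m.+1) Hm.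
  rewrite !app_comp !coker_comp0 !app0 Eeb => E2 E1.
  by move: (etrans (esym E1) E2) => /addrI /mcast_inj; apply; lia.
Qed.

End IotaBW.

Lemma coker_iota_ZW_univ r p q (a : gens Z p q) : (1 <= r)%N ->
  is_ZW_univ r a -> is_BW_iota r p q Z a B iota ->
  exists z : gens C (p + r%:Z - 1) (q + r%:Z - 2), is_ZW_univ r z.
Proof.
case: r => [//|[|k]] _ HZ.
  by move=> [e [Fe He]]; eexists; exact: coker_iota1_univ He.
move=> [Zb [bg [HZb [De [e [Fe [Zc [cg [HZc [u1 [u2 [u3 [Hcop Hio]]]]]]]]]]]]].
by eexists; exact: (coker_BW_univ HZ (ZW_univ _ HZb) Fe (ZW_univ _ HZc) Hcop Hio).
Qed.

End Cokernel.

End Multicomplexes.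

Theorem mainTheorem4 (R : comPzRingType) (n : ninf) (hn : ninf_ge2 n)
    (r : nat) (hr : (1 <= r)%N) (p q : int)
    (Z : mcx R n) (a : gens Z p q) (HZ : is_ZW r p q Z a)
    (B : mcx R n) (iota : mhom Z B) (HB : is_BW_iota r p q Z a B iota)
    (O : mcx R n) (HO : is_zero O) (C : mcx R n)
    (f : mhom Z O) (i : mhom O C) (j : mhom B C)
    (HC : is_pushout f iota i j)
    (Z' : mcx R n) (a' : gens Z' (p + r%:Z - 1) (q + r%:Z - 2))
    (HZ' : is_ZW r (p + r%:Z - 1) (q + r%:Z - 2) Z' a') :
  mcx_iso C Z'.
Proof.
have [z Cuniv] := coker_iota_ZW_univ HO HC hr (ZW_univ hr HZ) HB.
exact: ZW_univ_iso Cuniv (ZW_univ hr HZ').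
Qed.
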